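(* Let $\Gamma$ be a finite group, $F:\Gamma\to\Gamma$ a group automorphism, and $\mathbf{E}=\bigoplus_{w\in\Gamma}\mathbf{E}_w$ a finite-dimensional associative $\bar{\mathbb{Q}}_l$-algebra with $1$ with $\dim\mathbf{E}_w=1$, $\mathbf{E}_w\mathbf{E}_y=\mathbf{E}_{wy}$; choose basis elements $b_w\in\mathbf{E}_w$. Let $\iota:\mathbf{E}\to\mathbf{E}$ be an algebra automorphism with $\iota(\mathbf{E}_w)=\mathbf{E}_{F(w)}$ for all $w$. Let $V_1,\dots,V_{r'}$ be representatives of the isomorphism classes of simple $\mathbf{E}$-modules, numbered so that exactly for $i\in[1,r]$ there is a linear isomorphism $\iota_i:V_i\to V_i$ with $\iota_i(ev)=\iota(e)\iota_i(v)$ for all $e\in\mathbf{E}$, $v\in V_i$; fix such $\iota_i$. Let $\bar\Gamma$ be a set of representatives for the effective $F$-twisted conjugacy classes in $\Gamma$. Then the matrix $(\mathrm{tr}(b_x\iota_i,V_i))_{i\in[1,r],x\in\bar\Gamma}$ is square and invertible; in particular $|\bar\Gamma|=r$.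
   Context: The $F$-twisted conjugacy classes of $\Gamma$ are the orbits of the action $y:w\mapsto F^{-1}(y)wy^{-1}$. For $x\in\Gamma$ let $\Gamma_x=\{y: F^{-1}(y)xy^{-1}=x\}$ and define $\gamma_x:\Gamma_x\to\bar{\mathbb{Q}}_l^*$ by $\iota^{-1}(b_y)b_x=\gamma_x(y)b_xb_y$; $x$ is effective if $\gamma_x\equiv1$. Effectiveness is constant on $F$-twisted conjugacy classes, and a class is called effective if its elements are effective. *)

From HB Require Import structures.
From mathcomp Require Import all_boot all_order all_algebra all_fingroup all_field.
From mathcomp Require Import algC.
Set Implicit Arguments. Unset Strict Implicit. Unset Printing Implicit Defensive.
Import GRing.Theory.
Local Open Scope ring_scope.

Section Twisted.
Variable gT : finGroupType.
Variable Finv : gT -> gT.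

Definition twact (y w : gT) : gT := (Finv y * w * y^-1)%g.

Definition twclass (x : gT) : {set gT} := [set twact y x | y : gT].

Definition twstab (x : gT) : {set gT} := [set y : gT | twact y x == x].
End Twisted.

(* [iota] is an algebra automorphism of A, [(iota^-1)%VF] its inverse;
   gamma_x(y) is the scalar with iota^{-1}(b_y) b_x = gamma_x(y) b_x b_y;
   x is effective iff gamma_x = 1 identically on Gamma_x, i.e. iff
   iota^{-1}(b_y) b_x = b_x b_y for all y in Gamma_x. *)
Definition effective (gT : finGroupType) (A : falgType algC)
  (Finv : gT -> gT) (b : gT -> A) (iota : 'AEnd(A)) (x : gT) : Prop :=
  forall y : gT, y \in twstab Finv x ->
    (iota^-1)%VF (b y) * b x = b x * b y.

(* A left E-module of dimension n is encoded on row vectors 'rV_n: the action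
   of e on v is  v *m rho e, so rho must satisfy rho (a * b) = rho b *m rho a. *)
Definition is_Emodule (A : falgType algC) (n : nat)
  (rho : A -> 'M[algC]_n) : Prop :=
  [/\ forall (c : algC) (a a' : A), rho (c *: a + a') = c *: rho a + rho a',
      rho 1 = 1%:M
    & forall a a' : A, rho (a * a') = rho a' *m rho a].

Definition is_simple_Emodule (A : falgType algC) (n : nat)
  (rho : A -> 'M[algC]_n) : Prop :=
  [/\ is_Emodule rho, (0 < n)%N &
      forall U : 'M[algC]_n,
        (forall e : A, (U *m rho e <= U)%MS) -> (U == 0 :> 'M[algC]_n) || row_full U].

Definition Emod_iso (A : falgType algC) (n m : nat)
  (rho : A -> 'M[algC]_n) (sigma : A -> 'M[algC]_m) : Prop :=
  exists P : 'M[algC]_(n, m),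
    [/\ row_free P, row_full P & forall e : A, rho e *m P = P *m sigma e].

(* iota-stability: a linear iso iota_i = (v |-> v *m J) with
   iota_i(e v) = iota(e) iota_i(v). *)
Definition iota_twist (A : falgType algC) (iota : 'AEnd(A)) (n : nat)
  (rho : A -> 'M[algC]_n) (J : 'M[algC]_n) : Prop :=
  J \in unitmx /\ forall e : A, rho e *m J = J *m rho (iota e).

From HB Require Import structures.
From mathcomp Require Import all_boot all_order all_algebra all_fingroup all_field.
From mathcomp Require Import algC ring mxrepresentation.
Import GRing.Theory Num.Theory VectorInternalTheory.
Set Implicit Arguments. Unset Strict Implicit. Unset Printing Implicit Defensive.
Local Open Scope ring_scope.

(* Both sides compute the space of iota-twisted traces, the linear forms f on E with
   f (x y) = f (y iota(x)).  Such an f is invariant under the twisted conjugation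
   twconj z : e |-> iota^-1(b_z) e b_z^-1, which maps E_w onto E_(F^-1(z) w z^-1);
   on a non-effective class this forces f (b_w) = 0, so f is determined by its values
   on the b_x, x in Gbar, while summing the coordinate forms along twisted classes gives
   twisted traces dual to these b_x.  On the module side, averaging over the basis (b_w)
   gives Maschke's theorem and, with Schur's lemma, elements of E acting by any given
   matrix on V_i and by 0 on the other V_j; a twisted trace vanishes on the V_i-block
   unless V_i is iota-stable, where it is a multiple of tr(- iota_i).  So the forms
   tr(- iota_i), i <= r, are a basis of a space of dimension |Gbar|, and the matrix is
   their evaluation at the b_x, x in Gbar. *)

Section MatrixFacts.
Variable R : pzRingType.

Lemma mul_delta_mx_entry a m1 m2 c (P : 'M[R]_(a, m1)) (Q : 'M[R]_(m2, c)) q k p l :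
  (P *m delta_mx q k *m Q) p l = P p q * Q k l.
Proof.
have PdE c' : (P *m delta_mx q k) p c' = P p q * (c' == k)%:R.
  rewrite mxE (bigD1 q) //= mxE eqxx /= big1 ?addr0 // => t /negPf tq.
  by rewrite mxE tq mulr0.
rewrite mxE (bigD1 k) //= PdE eqxx mulr1 big1 ?addr0 // => t /negPf tk.
by rewrite PdE tk mulr0 mul0r.
Qed.

Lemma mxtrace_delta m (q k : 'I_m) : \tr (delta_mx q k : 'M[R]_m) = (q == k)%:R.
Proof.
rewrite /mxtrace (bigD1 q) //= mxE eqxx /= big1 ?addr0 // => t /negPf tq.
by rewrite mxE tq.
Qed.

Lemma mxtrace_mull_eq0 m (M : 'M[R]_m) : (forall X, \tr (X *m M) = 0) -> M = 0.
Proof.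
move=> trM0; apply/matrixP => k l; rewrite mxE.
have := trM0 (delta_mx l k); rewrite -[delta_mx l k]mul1mx /mxtrace.
rewrite (bigD1 l) //= mul_delta_mx_entry big1 ?addr0.
  by rewrite mxE eqxx mulr1n mul1r.
by move=> p pl; rewrite mul_delta_mx_entry mxE (negPf pl) mulr0n mul0r.
Qed.

Lemma central_mx_scalar m (G : 'M[R]_m) :
  (forall Y, G *m Y = Y *m G) -> exists k, G = k%:M.
Proof.
case: m G => [|m] G cG; first by exists 0; apply/matrixP => [[]].
exists (G 0 0); apply/matrixP => k l.
have := congr1 (fun M : 'M[R]_m.+1 => M k 0) (cG (delta_mx l 0)).
rewrite -[G *m _]mulmx1 -[delta_mx l 0 *m G]mul1mx mulmxA !mul_delta_mx_entry !mxE.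
by rewrite eqxx mulr1 => ->; rewrite mulr_natl.
Qed.

End MatrixFacts.

Definition lform (R : pzRingType) (V : lmodType R) (f : V -> R) :=
  forall c x y, f (c *: x + y) = c * f x + f y.

Section LinearForms.
Variables (R : pzRingType) (V : lmodType R) (f : V -> R).
Hypothesis f_lin : lform f.

Lemma lformD x y : f (x + y) = f x + f y.
Proof. by rewrite -[x in LHS]scale1r f_lin mul1r. Qed.

Lemma lform0 : f 0 = 0.
Proof. by apply: (addIr (f 0)); rewrite -lformD !add0r. Qed.

Lemma lformZ c x : f (c *: x) = c * f x.
Proof. by rewrite -[c *: x]addr0 f_lin lform0 addr0. Qed.

Lemma lform_sum (I : finType) (h : I -> V) : f (\sum_i h i) = \sum_i f (h i).
Proof. exact: (big_morph f lformD lform0). Qed.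

End LinearForms.

Section MatrixTwistedTrace.
Variables (K : fieldType) (m : nat) (J : 'M[K]_m) (phi : 'M[K]_m -> K).
Hypotheses (J_unit : J \in unitmx) (phi_lin : lform phi)
  (phi_tw : forall X Y, phi (Y *m X) = phi (invmx J *m X *m J *m Y)).

Lemma mx_twisted_trace : exists k, forall Z, phi Z = k * \tr (Z *m J).
Proof.
pose G := \matrix_(k, l) phi (delta_mx l k).
have phiE Z : phi Z = \tr (Z *m G).
  rewrite {1}(matrix_sum_delta Z) (lform_sum phi_lin) /mxtrace.
  apply: eq_bigr => k _; rewrite (lform_sum phi_lin) mxE.
  by apply: eq_bigr => l _; rewrite (lformZ phi_lin) !mxE.
have GY Y : G *m Y = J *m Y *m G *m invmx J.
  apply/eqP; rewrite -subr_eq0; apply/eqP; apply: mxtrace_mull_eq0 => X.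
  rewrite mulmxBr linearB /=; apply/eqP; rewrite subr_eq0; apply/eqP.
  rewrite mulmxA mxtrace_mulC mulmxA -phiE phi_tw phiE -!mulmxA.
  by rewrite (mxtrace_mulC (invmx J)) !mulmxA.
have GJ : G *m J = J *m G.
  by have := GY 1%:M; rewrite !mulmx1 => {1}->; rewrite mulmxKV.
have [k Gk] : exists k, invmx J *m G = k%:M.
  apply: central_mx_scalar => Y.
  rewrite -mulmxA GY !mulmxA mulVmx // mul1mx -!mulmxA; congr (_ *m _).
  by rewrite -{1}[G](mulKmx J_unit) -mulmxA -GJ mulmxK.
exists k => Z; rewrite phiE.
have -> : G = k *: J by rewrite -[G](mulKVmx J_unit) Gk mul_mx_scalar.
by rewrite -scalemxAr mxtraceZ.
Qed.

End MatrixTwistedTrace.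

Lemma invF_morph1 (gT : finGroupType) (F : gT -> gT) (F_inj : injective F) :
  {morph F : x y / (x * y)%g} -> invF F_inj 1%g = 1%g.
Proof.
move=> F_morph; have F1 : F 1%g = 1%g by apply: (mulIg (F 1%g)); rewrite -F_morph !mul1g.
by rewrite -{1}F1 invF_f.
Qed.

Section Modules.
Variable A : falgType algC.

Section Module.
Variables (m : nat) (sg : A -> 'M[algC]_m).
Hypothesis sgE : is_Emodule sg.

Lemma EmodL c a a' : sg (c *: a + a') = c *: sg a + sg a'.
Proof. by case: sgE. Qed.

Lemma Emod1 : sg 1 = 1%:M.
Proof. by case: sgE. Qed.

Lemma EmodM a a' : sg (a * a') = sg a' *m sg a.
Proof. by case: sgE. Qed.

Lemma EmodD a a' : sg (a + a') = sg a + sg a'.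
Proof. by rewrite -[a in LHS]scale1r EmodL scale1r. Qed.

Lemma Emod0 : sg 0 = 0.
Proof. by apply: (addIr (sg 0)); rewrite -EmodD !add0r. Qed.

Lemma EmodZ c a : sg (c *: a) = c *: sg a.
Proof. by rewrite -[c *: a]addr0 EmodL Emod0 addr0. Qed.

Lemma EmodB a a' : sg (a - a') = sg a - sg a'.
Proof. by rewrite -scaleN1r addrC EmodL scaleN1r addrC. Qed.

Lemma Emod_sum (I : finType) (f : I -> A) : sg (\sum_i f i) = \sum_i sg (f i).
Proof. exact: (big_morph sg EmodD Emod0). Qed.

Lemma Emod_mulV u : u \is a GRing.unit -> sg u *m sg u^-1 = 1%:M.
Proof. by move=> u_unit; rewrite -EmodM mulVr // Emod1. Qed.

Lemma Emod_Vmul u : u \is a GRing.unit -> sg u^-1 *m sg u = 1%:M.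
Proof. by move=> u_unit; rewrite -EmodM mulrV // Emod1. Qed.

End Module.

Lemma simple_Emod m (sg : A -> 'M[algC]_m) : is_simple_Emodule sg -> is_Emodule sg.
Proof. by case. Qed.

Lemma Emod_Schur m1 m2 (s1 : A -> 'M[algC]_m1) (s2 : A -> 'M[algC]_m2) (Y : 'M_(m1, m2)) :
  is_simple_Emodule s1 -> is_simple_Emodule s2 ->
  (forall e, s1 e *m Y = Y *m s2 e) -> Y = 0 \/ (row_free Y /\ row_full Y).
Proof.
move=> [_ _ simple1] [_ _ simple2] hY.
have [->|Y0] := eqVneq Y 0; [by left | right; split].
  rewrite -kermx_eq0.
  have : forall e, (kermx Y *m s1 e <= kermx Y)%MS.
    by move=> e; apply/sub_kermxP; rewrite -mulmxA hY mulmxA mulmx_ker mul0mx.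
  move/simple1 => /orP [//|]; rewrite -sub1mx => /sub_kermxP; rewrite mul1mx => Y0'.
  by rewrite Y0' eqxx in Y0.
have : forall e, (<<Y>>%MS *m s2 e <= <<Y>>)%MS.
  by move=> e; rewrite (eqmxMr _ (genmxE Y)) genmxE -hY submxMl.
move/simple2 => /orP [|]; first by rewrite -submx0 genmxE submx0 (negPf Y0).
by rewrite /row_full genmxE.
Qed.

Lemma Emod_Schur_scalar m (sg : A -> 'M[algC]_m) (Y : 'M_m) :
  is_simple_Emodule sg -> (forall e, sg e *m Y = Y *m sg e) -> exists l, Y = l%:M.
Proof.
move=> sg_simple hY.
have : size (char_poly Y) != 1%N.
  by rewrite size_char_poly; case: sg_simple => _ m0 _; rewrite eqSS -lt0n.
case/closed_rootP => l; rewrite -eigenvalue_root_char => /eigenvalueP [v hv v0].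
exists l; apply/eqP; rewrite -subr_eq0; apply/eqP.
have : forall e, sg e *m (Y - l%:M) = (Y - l%:M) *m sg e.
  by move=> e; rewrite mulmxBr mulmxBl hY scalar_mxC.
case/(Emod_Schur sg_simple sg_simple) => [//|[Yl_free _]].
have : v *m (Y - l%:M) = 0 *m (Y - l%:M) by rewrite mulmxBr hv mul_mx_scalar subrr mul0mx.
by move/(row_free_inj Yl_free) => v0'; rewrite v0' eqxx in v0.
Qed.

Section Automorphism.
Variable iota : 'AEnd(A).
Hypothesis iota_inj : lker iota = 0%VS.

Lemma iotaK : cancel iota (iota^-1)%VF.
Proof. by apply: lker0_lfunK; rewrite iota_inj. Qed.

Lemma iotaVK : cancel (iota^-1)%VF iota.
Proof. by apply: lker0_lfunVK; rewrite iota_inj. Qed.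

Lemma iotaVM x y : (iota^-1)%VF (x * y) = (iota^-1)%VF x * (iota^-1)%VF y.
Proof. by rewrite -{1}[x]iotaVK -{1}[y]iotaVK -rmorphM iotaK. Qed.

Lemma simple_Emod_aut m (sg : A -> 'M[algC]_m) :
  is_simple_Emodule sg -> is_simple_Emodule (fun e => sg (iota e)).
Proof.
case=> [[sgL sg1 sgM] m_gt0 sg_simple]; split=> // [|W hW].
  split=> [c a a'|//|a a']; first by rewrite linearP /= sgL.
  - by rewrite rmorph1 sg1.
  - by rewrite rmorphM sgM.
by apply: sg_simple => e; have := hW ((iota^-1)%VF e); rewrite iotaVK.
Qed.

End Automorphism.
End Modules.
Section GradedAlgebra.
Variables (gT : finGroupType) (A : falgType algC) (E : gT -> {vspace A}) (b : gT -> A).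
Hypotheses (E_sum : (\sum_(w : gT) E w)%VS = fullv)
  (E_direct : directv (\sum_(w : gT) E w))
  (E_dim : forall w : gT, \dim (E w) = 1%N)
  (E_mul : forall w y : gT, (E w * E y)%VS = E (w * y)%g)
  (b_in : forall w : gT, b w \in E w)
  (b_neq0 : forall w : gT, b w != 0).

Lemma E_line w : E w = <[b w]>%VS.
Proof. by apply/eqP; rewrite eq_sym eqEdim -memvE b_in E_dim dim_vline b_neq0. Qed.

Lemma memE_line w x : x \in E w -> exists k, x = k *: b w.
Proof. by rewrite E_line => /vlineP. Qed.

Lemma memE_mul w y x z : x \in E w -> z \in E y -> x * z \in E (w * y)%g.
Proof. by move=> xE zE; rewrite -E_mul; apply: memv_mul. Qed.

Lemma mulb_neq0 w y : b w * b y != 0.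
Proof.
apply/eqP => bwy0; have := E_dim (w * y)%g.
by rewrite -E_mul !E_line prodv_line bwy0 dim_vline eqxx.
Qed.

Lemma memE_scale_neq0 w x k : x = k *: b w -> x != 0 -> k != 0.
Proof. by move=> -> ; apply: contraNneq => ->; rewrite scale0r. Qed.

Definition coef w (a : A) : algC := coord [tuple b w] 0 (sumv_pi_for (esym E_sum) w a).

Lemma coefD w x y : coef w (x + y) = coef w x + coef w y.
Proof. by rewrite /coef !linearD. Qed.

Lemma coefZ w k x : coef w (k *: x) = k * coef w x.
Proof. by rewrite /coef !linearZ. Qed.

Lemma coef_expand a : a = \sum_w coef w a *: b w.
Proof.
rewrite -{1}(@sumv_pi_sum _ _ _ xpredT E a _ (esym E_sum)) ?memvf //.
apply: eq_bigr => w _; rewrite /coef.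
have piw : sumv_pi_for (esym E_sum) w a \in <<[tuple b w]>>%VS.
  by rewrite span_seq1 -E_line memv_sum_pi.
by rewrite {1}(coord_span piw) big_ord1.
Qed.

Lemma coef_sum (c : gT -> algC) w : coef w (\sum_y c y *: b y) = c w.
Proof.
set a := \sum_y _; have : \sum_y (coef y a - c y) *: b y = 0.
  by under eq_bigr do rewrite scalerBl; rewrite sumrB -coef_expand subrr.
move/(directv_sum_independent E_direct) => /(_ (fun y _ => memvZ _ (b_in y)) w isT).
by move/eqP; rewrite scaler_eq0 (negPf (b_neq0 w)) orbF subr_eq0 => /eqP.
Qed.

Lemma coefb w y : coef w (b y) = (w == y)%:R.
Proof.
have -> : b y = \sum_v (v == y)%:R *: b v.
  by rewrite (bigD1 y) //= eqxx scale1r big1 ?addr0 // => v /negPf ->; rewrite scale0r.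
by rewrite coef_sum.
Qed.

Lemma lform_expand f a : lform f -> f a = \sum_w coef w a * f (b w).
Proof.
move=> f_lin; rewrite {1}(coef_expand a) (lform_sum f_lin).
by under eq_bigr do rewrite (lformZ f_lin).
Qed.

Lemma mem1_E1 : (1 : A) \in E 1%g.
Proof.
have [k bb1] : exists k, b 1%g * b 1%g = k *: b 1%g.
  by apply: memE_line; rewrite -[X in E X](mulg1 1%g) memE_mul.
have k0 := memE_scale_neq0 bb1 (mulb_neq0 _ _).
(* [e] is an idempotent acting trivially on each line [E y], hence [e = 1]. *)
pose e := k^-1 *: b 1%g.
have ee : e * e = e.
  by rewrite /e -scalerAl -scalerAr bb1 !scalerA; congr (_ *: _); field.
have eb y : e * b y = b y.
  have [l el] : exists l, e * b y = l *: b y.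
    by apply: memE_line; rewrite -[X in E X](mul1g y) -scalerAl memvZ ?memE_mul.
  have l0 : l != 0.
    by apply: memE_scale_neq0 el _; rewrite -scalerAl scaler_eq0 negb_or invr_eq0 k0 mulb_neq0.
  have : l *: b y = (l * l) *: b y by rewrite -el -ee -mulrA el -scalerAr el scalerA.
  move/eqP; rewrite -subr_eq0 -scalerBl scaler_eq0 (negPf (b_neq0 y)) orbF.
  by rewrite subr_eq0 -{1}[l]mulr1 => /eqP /(mulfI l0) l1; rewrite el -l1 scale1r.
have ea a : e * a = a.
  rewrite [RHS](coef_expand a) [a in e * a](coef_expand a) mulr_sumr.
  by apply: eq_bigr => w _; rewrite -scalerAr eb.
have <- : e = 1 by rewrite -[e]mulr1 ea.
by rewrite memvZ.
Qed.

Lemma memE1 x : x \in E 1%g -> exists k, x = k%:A.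
Proof.
have -> : E 1%g = <[1]>%VS.
  by apply/eqP; rewrite eq_sym eqEdim -memvE mem1_E1 E_dim dim_vline oner_neq0.
by move/vlineP.
Qed.

Lemma mulbV_scalar v : exists2 k, k != 0 & b v * b v^-1%g = k%:A.
Proof.
have [k bbk] : exists k, b v * b v^-1%g = k%:A by apply: memE1; rewrite -(mulgV v) memE_mul.
by exists k => //; apply: contraNneq (mulb_neq0 v v^-1%g) => k0; rewrite bbk k0 scale0r.
Qed.

Lemma b_unit v : b v \is a GRing.unit.
Proof.
have [k1 k10 bb1] := mulbV_scalar v; have [k2 k20] := mulbV_scalar v^-1%g.
rewrite invgK => bb2.
pose y := k1^-1 *: b v^-1%g; pose y' := k2^-1 *: b v^-1%g.
have yR : b v * y = 1 by rewrite /y -scalerAr bb1 scalerA mulVf // scale1r.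
have y'L : y' * b v = 1 by rewrite /y' -scalerAl bb2 scalerA mulVf // scale1r.
have y'y : y' = y by rewrite -[y']mulr1 -yR mulrA y'L mul1r.
by apply/unitrP; exists y; split; rewrite // -y'y.
Qed.

Lemma memE_invb v : (b v)^-1 \in E v^-1%g.
Proof.
have [k k0 bbk] := mulbV_scalar v.
suff <- : k^-1 *: b v^-1%g = (b v)^-1 by rewrite memvZ.
apply: (mulrI (b_unit v)); rewrite divrr ?b_unit //.
by rewrite -scalerAr bbk scalerA mulVf // scale1r.
Qed.

Lemma mulbVb w v : (b w)^-1 * b v \in E (w^-1 * v)%g.
Proof. by rewrite memE_mul ?memE_invb. Qed.

Definition avg m1 m2 (s1 : A -> 'M[algC]_m1) (s2 : A -> 'M[algC]_m2) (X : 'M_(m1, m2)) :=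
  \sum_w s1 (b w)^-1 *m X *m s2 (b w).

Section Averaging.
Variables (m1 m2 : nat) (s1 : A -> 'M[algC]_m1) (s2 : A -> 'M[algC]_m2).
Hypotheses (s1E : is_Emodule s1) (s2E : is_Emodule s2).

Lemma avg_term_memE X v x : x \in E v -> x != 0 ->
  s1 x^-1 *m X *m s2 x = s1 (b v)^-1 *m X *m s2 (b v).
Proof.
move=> xE x0; have [k xk] := memE_line xE; have k0 := memE_scale_neq0 xk x0.
rewrite xk invrZ ?unitfE ?b_unit // (EmodZ s1E) (EmodZ s2E).
by rewrite -scalemxAl -scalemxAl -scalemxAr scalerA mulVf // scale1r.
Qed.

Lemma avg_commute X e : s1 e *m avg s1 s2 X = avg s1 s2 X *m s2 e.
Proof.
suff avg_b y : s1 (b y) *m avg s1 s2 X = avg s1 s2 X *m s2 (b y).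
  rewrite (coef_expand e) (Emod_sum s1E) (Emod_sum s2E) mulmx_suml mulmx_sumr.
  by apply: eq_bigr => y _; rewrite (EmodZ s1E) (EmodZ s2E) -scalemxAl avg_b scalemxAr.
rewrite /avg mulmx_sumr mulmx_suml [RHS](reindex_inj (mulgI y^-1)%g) /=.
apply: eq_bigr => w _; pose x := (b y)^-1 * b w.
have x_unit : x \is a GRing.unit by rewrite unitrMl ?unitrV ?b_unit.
have x0 : x != 0 by apply: contraTneq x_unit => ->; rewrite unitr0.
rewrite -(avg_term_memE X (mulbVb y w) x0).
have -> : b w = b y * x by rewrite /x mulVKr ?b_unit.
by rewrite (EmodM s2E) !mulmxA -(EmodM s1E) mulKr ?b_unit // invrM ?b_unit // mulrVK ?b_unit.
Qed.

End Averaging.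

Lemma mxtrace_avg m (sg : A -> 'M[algC]_m) X : is_Emodule sg ->
  \tr (avg sg sg X) = #|gT|%:R * \tr X.
Proof.
move=> sgE; rewrite /avg raddf_sum /= (eq_bigr (fun _ => \tr X)) ?sumr_const ?mulr_natl //.
by move=> w _; rewrite mxtrace_mulC mulmxA (Emod_mulV sgE (b_unit w)) mul1mx.
Qed.

Lemma card_neq0 : (#|gT|%:R : algC) != 0.
Proof. by rewrite pnatr_eq0 -lt0n; apply/card_gt0P; exists 1%g. Qed.

Local Notation dA := (dim A).

Definition lmx (f : A -> A) : 'M[algC]_dA := \matrix_(k < dA) v2r (f (@r2v _ A 'e_k)).

Lemma mul_lmx (f : A -> A) v :
  (forall c x y, f (c *: x + y) = c *: f x + f y) -> v *m lmx f = v2r (f (r2v v)).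
Proof.
move=> f_lin; have fD x y : f (x + y) = f x + f y by rewrite -[x in LHS]scale1r f_lin scale1r.
have f0 : f 0 = 0 by apply: (addIr (f 0)); rewrite -fD !add0r.
rewrite mulmx_sum_row [v in RHS]row_sum_delta !linear_sum /= (big_morph f fD f0) linear_sum.
apply: eq_bigr => i _; rewrite rowK linearZ /= -[_ *: r2v _]addr0 f_lin f0 addr0.
by rewrite linearZ.
Qed.

Definition regE (e : A) : 'M[algC]_dA := lmx (fun x => e * x).

Lemma mul_regE v e : v *m regE e = v2r (e * r2v v).
Proof. by apply: mul_lmx => c x y; rewrite mulrDr scalerAr. Qed.

Lemma mx_rV_ext (M M' : 'M[algC]_dA) : (forall v : 'rV_dA, v *m M = v *m M') -> M = M'.
Proof. by move=> MM'; apply/row_matrixP => k; rewrite !rowE MM'. Qed.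

Lemma regE_Emod : is_Emodule regE.
Proof.
split=> [c a a'| |a a']; apply: mx_rV_ext => v.
- by rewrite mulmxDr -scalemxAr !mul_regE mulrDl -scalerAl !linearP.
- by rewrite mul_regE mul1r r2vK mulmx1.
- by rewrite mulmxA !mul_regE v2rK mulrA.
Qed.

Definition submodE (U : 'M[algC]_dA) := forall e, (U *m regE e <= U)%MS.

Lemma submodE_mul (U : 'M[algC]_dA) m (W : 'M_(m, dA)) e :
  submodE U -> (W <= U)%MS -> (W *m regE e <= U)%MS.
Proof. by move=> U_sub WU; apply: submx_trans (U_sub e); apply: submxMr. Qed.

Lemma maschke_regE U : submodE U -> exists Pi : 'M[algC]_dA,
  [/\ forall e, regE e *m Pi = Pi *m regE e,
      forall u : 'rV_dA, (u <= U)%MS -> u *m Pi = u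
    & forall v : 'rV_dA, (v *m Pi <= U)%MS].
Proof.
move=> U_sub; have [p0 p0_id p0_sub] : exists2 p0 : 'M[algC]_dA,
  forall u : 'rV_dA, (u <= U)%MS -> u *m p0 = u & forall v : 'rV_dA, (v *m p0 <= U)%MS.
  exists (proj_mx U U^C%MS) => [u uU|v]; last exact: proj_mx_sub.
  by rewrite proj_mx_id ?capmx_compl.
exists ((#|gT|%:R)^-1 *: avg regE regE p0); split.
- by move=> e; rewrite -scalemxAr -scalemxAl avg_commute //; apply: regE_Emod.
- move=> u uU; rewrite -scalemxAr /avg mulmx_sumr.
  rewrite (eq_bigr (fun _ => u)) ?sumr_const.
    by rewrite -scaler_nat scalerA mulVf ?card_neq0 // scale1r.
  move=> w _; rewrite !mulmxA p0_id ?submodE_mul //.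
  by rewrite -mulmxA (Emod_Vmul regE_Emod (b_unit w)) mulmx1.
- move=> v; rewrite -scalemxAr scalemx_sub // /avg mulmx_sumr summx_sub // => w _.
  by rewrite !mulmxA submodE_mul // p0_sub.
Qed.

Section SubModule.
Variable U : 'M[algC]_dA.
Hypothesis U_sub : submodE U.

Definition subregE (e : A) : 'M[algC]_(\rank U) := in_submod U (val_submod 1%:M *m regE e).

Lemma val_submodJ_regE m (W : 'M_(m, \rank U)) e :
  val_submod (W *m subregE e) = val_submod W *m regE e.
Proof.
rewrite 2!(mulmxA W) -val_submodE in_submodK //.
by apply: submodE_mul; rewrite // val_submodP.
Qed.

Lemma in_submodJ_regE m (W : 'M_(m, dA)) e :
  (W <= U)%MS -> in_submod U (W *m regE e) = in_submod U W *m subregE e.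
Proof.
move=> WU; rewrite mulmxA; congr (in_submod _ _).
by rewrite mulmxA -val_submodE in_submodK.
Qed.

Lemma subregE_Emod : is_Emodule subregE.
Proof.
have [regL reg1 regM] := regE_Emod.
split=> [c a a'||a a'].
- by rewrite /subregE regL mulmxDr -scalemxAr linearP.
- by rewrite /subregE reg1 mulmx1 val_submodK.
- by rewrite /subregE regM mulmxA in_submodJ_regE // submodE_mul ?val_submodP.
Qed.

End SubModule.

Section Wedderburn.
Variables (r' : nat) (n : 'I_r' -> nat) (rho : forall i : 'I_r', A -> 'M[algC]_(n i)).
Hypotheses (rho_simple : forall i, is_simple_Emodule (rho i))
  (rho_all : forall (m : nat) (sigma : A -> 'M[algC]_m),
      is_simple_Emodule sigma -> exists i, Emod_iso (rho i) sigma)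
  (rho_distinct : forall i j, Emod_iso (rho i) (rho j) -> i = j).

Let rhoE i : is_Emodule (rho i) := simple_Emod (rho_simple i).

Lemma n_neq0 i : ((n i)%:R : algC) != 0.
Proof. by rewrite pnatr_eq0 -lt0n; case: (rho_simple i). Qed.

Lemma avg_rho_neq i j X : i != j -> avg (rho i) (rho j) X = 0.
Proof.
move=> ij; have commX := avg_commute (rhoE i) (rhoE j) X.
case: (Emod_Schur (rho_simple i) (rho_simple j) commX) => [//|[X_free X_full]].
by case/eqP: ij; apply: rho_distinct; exists (avg (rho i) (rho j) X).
Qed.

Lemma avg_rho_eq i X : avg (rho i) (rho i) X = ((#|gT|%:R * \tr X) / (n i)%:R)%:M.
Proof.
have [l avgX] := Emod_Schur_scalar (rho_simple i) (avg_commute (rhoE i) (rhoE i) X).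
have := mxtrace_avg X (rhoE i); rewrite avgX mxtrace_scalar => <-.
by rewrite -[l *+ _]mulr_natr mulfK ?n_neq0.
Qed.

Definition embed i (Z : 'M[algC]_(n i)) : A :=
  ((n i)%:R / #|gT|%:R) *: \sum_w \tr (rho i (b w)^-1 *m Z) *: b w.

Lemma rho_embed_entry i j (Z : 'M[algC]_(n i)) k l :
  rho j (embed Z) k l = (n i)%:R / #|gT|%:R *
    \sum_p \sum_q Z q p * avg (rho i) (rho j) (delta_mx q k) p l.
Proof.
rewrite /embed (EmodZ (rhoE j)) (Emod_sum (rhoE j)) mxE; congr (_ * _).
rewrite summxE; under eq_bigr do rewrite (EmodZ (rhoE j)) mxE /mxtrace mulr_suml.
rewrite exchange_big /=; apply: eq_bigr => p _.
under eq_bigr do rewrite mxE mulr_suml.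
rewrite exchange_big /=; apply: eq_bigr => q _.
rewrite /avg summxE mulr_sumr; apply: eq_bigr => w _.
by rewrite mul_delta_mx_entry mulrCA mulrA.
Qed.

Lemma rho_embed_neq i j Z : i != j -> rho j (@embed i Z) = 0.
Proof.
move=> ij; apply/matrixP => k l; rewrite rho_embed_entry mxE.
rewrite big1 ?mulr0 // => p _; rewrite big1 // => q _.
by rewrite avg_rho_neq // mxE mulr0.
Qed.

Lemma rho_embed i Z : rho i (@embed i Z) = Z.
Proof.
apply/matrixP => k l; rewrite rho_embed_entry.
under eq_bigr do under eq_bigr do rewrite avg_rho_eq mxtrace_delta mxE.
rewrite (bigD1 l) //= (bigD1 k) //= !eqxx /= big1; last first.
  by move=> q /negPf qk; rewrite qk !mulr0 mul0r mulr0.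
rewrite big1; last by move=> p /negPf pl; rewrite big1 // => q _; rewrite pl mulr0n mulr0.
by rewrite !addr0 mulr1 mulr1n; field; rewrite n_neq0 card_neq0.
Qed.

Definition annihilated (U : 'M[algC]_dA) :=
  forall v : 'rV_dA, (v <= U)%MS -> forall i, rho i (r2v v) = 0.

Lemma simple_submod_not_annihilated U : submodE U -> U != 0 ->
  is_simple_Emodule (subregE U) -> ~ annihilated U.
Proof.
move=> U_sub U0 U_simple U_ann.
have [i [P [_ P_full rhoP]]] := rho_all U_simple.
have [Q QP] := row_fullP P_full.
have acts0 x : (forall i, rho i x = 0) -> forall u : 'rV_dA, (u <= U)%MS -> u *m regE x = 0.
  move=> x0 u uU; have subx0 : subregE U x = 0.
    by rewrite -[subregE U x]mul1mx -QP -mulmxA -rhoP x0 mul0mx mulmx0.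
  have := val_submodJ_regE U_sub 1%:M x; rewrite mul1mx subx0 linear0 => /esym regx0.
  have : (u <= val_submod (1%:M : 'M_(\rank U)))%MS by rewrite val_submod1.
  by case/submxP => w ->; rewrite -mulmxA regx0 mulmx0.
have [u uU u0] : exists2 u : 'rV_dA, (u <= U)%MS & u != 0 by apply/rowV0Pn.
have [Pi [Pi_comm Pi_id Pi_sub]] := maschke_regE U_sub.
have one_regE x : v2r 1 *m regE x = v2r x by rewrite mul_regE v2rK mulr1.
(* In [E], [u = u Pi = u * (1 Pi)] with [1 Pi] in [U], on which [u] acts by zero. *)
apply/negP: u0; apply/negPn/eqP.
rewrite -(Pi_id _ uU) -[u in u *m Pi]r2vK -one_regE -mulmxA Pi_comm mulmxA.
exact: acts0 (U_ann u uU) _ (Pi_sub _).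
Qed.

Lemma annihilated_submod0 U : submodE U -> annihilated U -> U = 0.
Proof.
move: {2}(\rank U) (leqnn (\rank U)) => r; elim: r U => [|r IH] U rkU U_sub U_ann.
  by apply/eqP; rewrite -mxrank_eq0 -leqn0.
apply/eqP/negPn/negP => U0; apply: (simple_submod_not_annihilated U_sub U0 _ U_ann).
split; [exact: subregE_Emod | by rewrite lt0n mxrank_eq0 | move=> W W_sub].
case W0: (W == 0) => //=; apply/negPn/negP => W_nfull.
have : <<val_submod W>>%MS = 0.
  apply: IH.
  - rewrite mxrank_gen /val_submod /= mxrankMfree ?row_base_free // -ltnS.
    apply: leq_trans rkU; rewrite ltn_neqAle rank_leq_col andbT.
    exact: W_nfull.
  - move=> e; rewrite (eqmxMr _ (genmxE _)) genmxE -val_submodJ_regE //.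
    by rewrite val_submodS W_sub.
  - move=> v; rewrite genmxE => vW; apply: U_ann; exact: submx_trans vW (val_submodP _).
by move/eqP; rewrite -mxrank_eq0 mxrank_gen mxrank_eq0 val_submod_eq0 W0.
Qed.

Lemma rho_inj a : (forall i, rho i a = 0) -> a = 0.
Proof.
(* The rows of [U] span the left ideal [E a]. *)
move=> a0; pose U := lmx (fun x => x * a).
have mulU v : v *m U = v2r (r2v v * a).
  by apply: mul_lmx => c x y; rewrite mulrDl scalerAl.
have U_sub : submodE U.
  move=> e; apply/row_subP => k; rewrite rowE mulmxA mulU mul_regE v2rK mulrA.
  by rewrite -[e * r2v _]v2rK -mulU submxMl.
have U0 : U = 0.
  apply: annihilated_submod0 => // v /submxP [w ->] i.
  by rewrite mulU v2rK (EmodM (rhoE i)) a0 mul0mx.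
have := mulU (v2r 1); rewrite U0 mulmx0 v2rK mul1r => /(congr1 r2v).
by rewrite v2rK linear0.
Qed.

Lemma eq_rho a a' : (forall i, rho i a = rho i a') -> a = a'.
Proof.
move=> aa'; apply/eqP; rewrite -subr_eq0; apply/eqP; apply: rho_inj => i.
by rewrite (EmodB (rhoE i)) aa' subrr.
Qed.

Lemma embedL i c Z Z' : @embed i (c *: Z + Z') = c *: embed Z + embed Z'.
Proof.
apply: eq_rho => j; rewrite (EmodL (rhoE j)).
by have [<-|ij] := eqVneq i j; rewrite ?rho_embed // !rho_embed_neq // scaler0 addr0.
Qed.

Lemma embedM i X Y : @embed i (Y *m X) = embed X * embed Y.
Proof.
apply: eq_rho => j; rewrite (EmodM (rhoE j)).
by have [<-|ij] := eqVneq i j; rewrite ?rho_embed // !rho_embed_neq // mulmx0.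
Qed.

Lemma embedM_neq i j X Y : i != j -> @embed i X * @embed j Y = 0.
Proof.
move=> ij; apply: rho_inj => k; rewrite (EmodM (rhoE k)).
have [<-|ik] := eqVneq i k; first by rewrite rho_embed_neq 1?eq_sym // mul0mx.
by rewrite (rho_embed_neq _ ik) mulmx0.
Qed.

Lemma sum_embed_rho a : a = \sum_i embed (rho i a).
Proof.
apply: eq_rho => j; rewrite (Emod_sum (rhoE j)) (bigD1 j) //= rho_embed.
by rewrite big1 ?addr0 // => i; apply: rho_embed_neq.
Qed.

Section TwistedTraces.
Variables (F : gT -> gT) (F_inj : injective F) (iota : 'AEnd(A)).
Hypotheses (F_morph : {morph F : x y / (x * y)%g}) (iota_inj : lker iota = 0%VS)
  (iota_grad : forall w : gT, (iota @: E w)%VS = E (F w)).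

Local Notation Finv := (invF F_inj).
Local Notation iotaV := (iota^-1)%VF.

Lemma memE_iota z x : x \in E z -> iota x \in E (F z).
Proof. by move=> xE; rewrite -iota_grad memv_img. Qed.

Lemma memE_iotaV z x : x \in E z -> iotaV x \in E (Finv z).
Proof.
have := iota_grad (Finv z); rewrite f_invF => <- /memv_imgP [u uE ->].
by rewrite iotaK.
Qed.

Definition twconj z e := iotaV (b z) * e * (b z)^-1.

Lemma memE_twconj z v x : x \in E v -> twconj z x \in E (twact Finv z v).
Proof. by move=> xE; rewrite /twconj /twact !memE_mul ?memE_iotaV ?memE_invb. Qed.

Lemma twconjL z c x y : twconj z (c *: x + y) = c *: twconj z x + twconj z y.
Proof. by rewrite /twconj mulrDr mulrDl -scalerAr -scalerAl. Qed.

Lemma twconjM z u e : twconj z (twconj u e) = twconj (z * u)%g e.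
Proof.
have [c bzu] := memE_line (memE_mul (b_in z) (b_in u)).
have c0 := memE_scale_neq0 bzu (mulb_neq0 z u).
have -> : twconj z (twconj u e) = iotaV (b z * b u) * e * (b z * b u)^-1.
  by rewrite /twconj iotaVM // invrM ?b_unit // !mulrA.
rewrite bzu linearZ invrZ ?unitfE ?b_unit // /twconj.
by rewrite -!scalerAr -!scalerAl scalerA mulVf // scale1r.
Qed.

Definition twtrace (f : A -> algC) := forall x y, f (x * y) = f (y * iota x).

Lemma twtrace_twconj f z e : twtrace f -> f (twconj z e) = f e.
Proof. by move=> f_tw; rewrite /twconj -mulrA f_tw iotaVK // mulrVK ?b_unit. Qed.

Lemma twconj_twtrace f : lform f -> (forall z e, f (twconj z e) = f e) -> twtrace f.
Proof.
move=> f_lin f_twconj x y.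
have fMl : lform (fun x => f (x * y)) by move=> c a a'; rewrite mulrDl -scalerAl f_lin.
have fMr : lform (fun x => f (y * iota x)).
  by move=> c a a'; rewrite linearP /= mulrDr -scalerAr f_lin.
(* On [x = b z], the right-hand side is the left-hand side conjugated by [twconj (F z)]. *)
rewrite (lform_expand x fMl) (lform_expand x fMr); apply: eq_bigr => z _; congr (_ * _).
have [mu iota_bz] := memE_line (memE_iota (b_in z)).
have mu0 : mu != 0.
  apply: contraNneq (b_neq0 z) => mu0.
  by rewrite -[b z](iotaK iota_inj) iota_bz mu0 scale0r linear0.
have iotaV_bFz : iotaV (b (F z)) = mu^-1 *: b z.
  by rewrite -[b z](iotaK iota_inj) iota_bz linearZ /= scalerA mulVf // scale1r.
rewrite -[RHS](f_twconj (F z)) /twconj iotaV_bFz iota_bz.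
by rewrite -!scalerAr -!scalerAl !scalerA mulfV // scale1r mulrA mulrK ?b_unit.
Qed.

Definition effectiveb x :=
  [forall y, (y \in twstab Finv x) ==> (iotaV (b y) * b x == b x * b y)].

Lemma effectiveP x : reflect (effective Finv b iota x) (effectiveb x).
Proof.
apply: (iffP forallP) => [eff y yx|eff y]; first by have := eff y; rewrite yx => /eqP.
by apply/implyP => yx; apply/eqP; apply: eff.
Qed.

Lemma twact1 x : twact Finv 1%g x = x.
Proof. by rewrite /twact invF_morph1 // mul1g invg1 mulg1. Qed.

Section TwistedTrace.
Variable f : A -> algC.
Hypotheses (f_lin : lform f) (f_tw : twtrace f).

Lemma twtrace_b_twact z u : exists k, f (b u) = k * f (b (twact Finv z u)).
Proof.
have [k uk] := memE_line (memE_twconj z (b_in u)).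
by exists k; rewrite -(twtrace_twconj z (b u) f_tw) uk (lformZ f_lin).
Qed.

Lemma twtrace_b_noneff u : ~ effective Finv b iota u -> f (b u) = 0.
Proof.
move/effectiveP; rewrite negb_forall => /existsP [z]; rewrite negb_imply inE.
case/andP=> /eqP zu nb.
(* [twconj z] scales [b u] by some [l], and [l != 1] as [u] is not effective. *)
have [l ul] := memE_line (memE_twconj z (b_in u)); rewrite zu in ul.
have : f (b u) = l * f (b u) by rewrite -(lformZ f_lin) -ul twtrace_twconj.
move/eqP; rewrite -subr_eq0 -{1}[f (b u)]mul1r -mulrBl mulf_eq0 subr_eq0.
case/orP => [/eqP l1|/eqP //]; move: ul; rewrite -l1 scale1r /twconj => ul.
by case/eqP: nb; rewrite -[in RHS]ul mulrVK ?b_unit.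
Qed.

Lemma twtrace_embed_unstable i : (forall Ji, ~ iota_twist iota (rho i) Ji) ->
  forall Z, f (@embed i Z) = 0.
Proof.
move=> i_unstable Z.
have [k [P [P_free P_full rhoP]]] := rho_all (simple_Emod_aut iota_inj (rho_simple i)).
have [ki|ki] := eqVneq k i.
  by subst k; case: (i_unstable P); split; rewrite -?row_free_unit.
have [Q QP] := row_fullP P_full.
(* [V_i] twisted by [iota] is [V_k], [k != i], and [embed k X * embed i Y = 0]. *)
have embed0 X Y : f (@embed i (Q *m X *m P *m Y)) = 0.
  pose x := @embed k X; pose y := @embed i Y.
  have -> : @embed i (Q *m X *m P *m Y) = y * iota x.
    apply: eq_rho => j; rewrite (EmodM (rhoE j)).
    have [<-|ij] := eqVneq i j; last by rewrite /y !rho_embed_neq // mulmx0.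
    rewrite /y !rho_embed; congr (_ *m _).
    by rewrite -(rho_embed X) -/x -mulmxA rhoP mulmxA QP mul1mx.
  by rewrite -f_tw embedM_neq // lform0.
by have := embed0 (P *m Z *m Q) 1%:M; rewrite mulmx1 !mulmxA QP mul1mx -mulmxA QP mulmx1.
Qed.

Lemma twtrace_embed_twist i Ji : iota_twist iota (rho i) Ji ->
  exists k, forall Z, f (@embed i Z) = k * \tr (Z *m Ji).
Proof.
case=> Ji_unit rhoJ; apply: (@mx_twisted_trace _ _ Ji (fun Z => f (embed Z))) => //.
  by move=> c Z Z'; rewrite embedL f_lin.
move=> X Y; rewrite embedM f_tw; congr f; apply: eq_rho => j; rewrite !(EmodM (rhoE j)).
have [<-|ij] := eqVneq i j; last by rewrite !rho_embed_neq // mulmx0.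
by rewrite !rho_embed; congr (_ *m _); rewrite -{2}(rho_embed X) -mulmxA rhoJ mulKmx.
Qed.

End TwistedTrace.

Section CharacterTable.
Variable Gbar : {set gT}.
Hypotheses (Gbar_eff : forall x, x \in Gbar -> effective Finv b iota x)
  (Gbar_rep : forall x, effective Finv b iota x ->
      exists! g, g \in Gbar /\ g \in twclass Finv x).

Lemma twtrace_eq0 f : lform f -> twtrace f -> {in Gbar, forall g, f (b g) = 0} ->
  forall a, f a = 0.
Proof.
move=> f_lin f_tw f0 a; rewrite (lform_expand a f_lin) big1 // => u _.
case: (effectiveP u) => [u_eff|u_neff]; last by rewrite twtrace_b_noneff ?mulr0.
have [g [[gG /imsetP [z _ gz]] _]] := Gbar_rep u_eff.
by have [k ->] := twtrace_b_twact f_lin f_tw z u; rewrite -gz f0 ?mulr0.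
Qed.

Definition clcoef g e := \sum_z coef g (twconj z e).

Lemma clcoef_lform g : lform (clcoef g).
Proof.
move=> c x y; rewrite /clcoef mulr_sumr -big_split.
by apply: eq_bigr => z _; rewrite twconjL coefD coefZ.
Qed.

Lemma clcoef_twtrace g : twtrace (clcoef g).
Proof.
apply: twconj_twtrace => [|u e]; first exact: clcoef_lform.
by rewrite /clcoef; under eq_bigr do rewrite twconjM; rewrite [RHS](reindex_inj (mulIg u)).
Qed.

Lemma clcoef_b_neq g g' : g \in Gbar -> g' \in Gbar -> g != g' -> clcoef g (b g') = 0.
Proof.
move=> gG g'G gg'; rewrite /clcoef big1 // => z _.
have [k ->] := memE_line (memE_twconj z (b_in g')).
rewrite coefZ coefb; case: eqP => [g_twact|]; last by rewrite mulr0.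
have [g0 [_ rep_uniq]] := Gbar_rep (Gbar_eff g'G).
have g_cl : g \in twclass Finv g' by apply/imsetP; exists z.
have g'_cl : g' \in twclass Finv g' by apply/imsetP; exists 1%g; rewrite ?twact1.
by case/eqP: gg'; rewrite -(rep_uniq g (conj gG g_cl)) -(rep_uniq g' (conj g'G g'_cl)).
Qed.

Lemma clcoef_b_eq g : g \in Gbar -> clcoef g (b g) != 0.
Proof.
move=> gG; rewrite /clcoef (eq_bigr (fun z => if z \in twstab Finv g then 1 else 0)).
  rewrite -big_mkcond /= sumr_const pnatr_eq0 -lt0n; apply/card_gt0P.
  by exists 1%g; rewrite inE twact1.
move=> z _; case: ifPn => [z_stab|z_nstab].
  by rewrite /twconj (Gbar_eff gG z_stab) mulrK ?b_unit // coefb eqxx.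
have [k ->] := memE_line (memE_twconj z (b_in g)).
rewrite coefZ coefb; case: eqP => [g_twact|]; last by rewrite mulr0.
by move: z_nstab; rewrite inE -g_twact eqxx.
Qed.

Variables (S : {set 'I_r'}) (J : forall i : 'I_r', 'M[algC]_(n i)).
Hypotheses (S_def : forall i, i \in S <-> exists J, iota_twist iota (rho i) J)
  (J_twist : forall i, i \in S -> iota_twist iota (rho i) (J i)).

Definition twchar i e := \tr (rho i e *m J i).

Lemma twchar_lform i : lform (twchar i).
Proof. by move=> c x y; rewrite /twchar (EmodL (rhoE i)) mulmxDl -scalemxAl mxtraceD mxtraceZ. Qed.

Lemma twchar_twtrace i : i \in S -> twtrace (twchar i).
Proof.
move=> iS x y; have [_ rhoJ] := J_twist iS.
by rewrite /twchar !(EmodM (rhoE i)) -mulmxA rhoJ mulmxA mxtrace_mulC mulmxA.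
Qed.

Lemma twchar_embed_invJ i : i \in S -> twchar i (embed (invmx (J i))) = (n i)%:R.
Proof.
by move=> iS; have [J_unit _] := J_twist iS; rewrite /twchar rho_embed mulVmx ?mxtrace1.
Qed.

Lemma twtrace_span f : lform f -> twtrace f ->
  exists kap : 'I_r' -> algC, forall a, f a = \sum_(i in S) kap i * twchar i a.
Proof.
move=> f_lin f_tw; exists (fun i => f (embed (invmx (J i))) / (n i)%:R) => a.
rewrite {1}(sum_embed_rho a) (lform_sum f_lin) (bigID (mem S)) /=.
rewrite [X in _ + X]big1 ?addr0 => [|i iS]; last first.
  by apply: twtrace_embed_unstable => // Ji iJ; case/negP: iS; apply/S_def; exists Ji.
apply: eq_bigr => i iS; have [k fk] := twtrace_embed_twist f_lin f_tw (J_twist iS).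
have [J_unit _] := J_twist iS.
by rewrite !fk mulVmx // mxtrace1 mulfK ?n_neq0.
Qed.

Lemma twchar_free (c : 'I_#|S| -> algC) :
  (forall a, \sum_k c k * twchar (enum_val k) a = 0) -> forall k, c k = 0.
Proof.
move=> c0 k; have kS := enum_valP k; have := c0 (embed (invmx (J (enum_val k)))).
rewrite (bigD1 k) //= twchar_embed_invJ // big1 ?addr0 => [/eqP|j jk].
  by rewrite mulf_eq0 (negPf (n_neq0 _)) orbF => /eqP.
by rewrite /twchar rho_embed_neq ?mul0mx ?linear0 ?mulr0 // (inj_eq enum_val_inj) eq_sym.
Qed.

Definition twchar_mx := \matrix_(i < #|S|, j < #|Gbar|) twchar (enum_val i) (b (enum_val j)).

Lemma twchar_mx_free : row_free twchar_mx.
Proof.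
apply: inj_row_free => c cM0; apply/rowP => k; rewrite mxE.
apply: (twchar_free (c := c 0)) => a.
apply: (twtrace_eq0 (f := fun e => \sum_k c 0 k * twchar (enum_val k) e)) => [x y z|x y|g gG].
- rewrite mulr_sumr -big_split; apply: eq_bigr => i _.
  by rewrite twchar_lform mulrDr mulrCA.
- by apply: eq_bigr => i _; rewrite twchar_twtrace ?enum_valP.
- have := congr1 (fun m : 'rV_#|Gbar| => m 0 (enum_rank_in gG g)) cM0.
  rewrite !mxE => fbg0; rewrite -[RHS]fbg0.
  by apply: eq_bigr => i _; rewrite mxE enum_rankK_in.
Qed.

Lemma card_Gbar_le : (#|Gbar| <= #|S|)%N.
Proof.
pose N := \matrix_(j, j' < #|Gbar|) clcoef (enum_val j) (b (enum_val j')).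
have N_free : row_free N.
  apply: inj_row_free => c cN0; apply/rowP => j; rewrite mxE.
  have := congr1 (fun m : 'rV_#|Gbar| => m 0 j) cN0; rewrite !mxE (bigD1 j) //= big1 ?addr0.
    by rewrite mxE => /eqP; rewrite mulf_eq0 (negPf (clcoef_b_eq (enum_valP j))) orbF => /eqP.
  by move=> j' j'j; rewrite mxE clcoef_b_neq ?mulr0 ?enum_valP // (inj_eq enum_val_inj).
have NM : (N <= twchar_mx)%MS.
  apply/row_subP => j.
  have [kap fk] := twtrace_span (clcoef_lform (enum_val j)) (clcoef_twtrace _).
  have -> : row j N = (\row_i kap (enum_val i)) *m twchar_mx.
    apply/rowP => j'; rewrite !mxE fk big_enum_val.
    by apply: eq_bigr => i _; rewrite !mxE.
  exact: submxMl.
by rewrite -(eqP N_free); apply: leq_trans (mxrankS NM) (rank_leq_row _).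
Qed.

End CharacterTable.
End TwistedTraces.
End Wedderburn.
End GradedAlgebra.

Theorem mainTheorem16
  (gT : finGroupType)
  (F : gT -> gT) (F_inj : injective F)
  (F_morph : {morph F : x y / (x * y)%g})
  (A : falgType algC)
  (E : gT -> {vspace A})
  (E_sum : (\sum_(w : gT) E w)%VS = fullv)
  (E_direct : directv (\sum_(w : gT) E w))
  (E_dim : forall w : gT, \dim (E w) = 1%N)
  (E_mul : forall w y : gT, (E w * E y)%VS = E (w * y)%g)
  (b : gT -> A)
  (b_in : forall w : gT, b w \in E w)
  (b_neq0 : forall w : gT, b w != 0)
  (iota : 'AEnd(A))
  (iota_inj : lker iota = 0%VS)
  (iota_grad : forall w : gT, (iota @: E w)%VS = E (F w))
  (r' : nat) (n : 'I_r' -> nat) (rho : forall i : 'I_r', A -> 'M[algC]_(n i))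
  (rho_simple : forall i, is_simple_Emodule (rho i))
  (rho_all : forall (m : nat) (sigma : A -> 'M[algC]_m),
      is_simple_Emodule sigma -> exists i, Emod_iso (rho i) sigma)
  (rho_distinct : forall i j, Emod_iso (rho i) (rho j) -> i = j)
  (S : {set 'I_r'})
  (S_def : forall i, i \in S <-> exists J, iota_twist iota (rho i) J)
  (J : forall i : 'I_r', 'M[algC]_(n i))
  (J_twist : forall i, i \in S -> iota_twist iota (rho i) (J i))
  (Gbar : {set gT})
  (Gbar_eff : forall x, x \in Gbar -> effective (invF F_inj) b iota x)
  (Gbar_rep : forall x, effective (invF F_inj) b iota x ->
      exists! g, g \in Gbar /\ g \in twclass (invF F_inj) x) :
  let M := \matrix_(i < #|S|, j < #|Gbar|)
             \tr (rho (enum_val i) (b (enum_val j)) *m J (enum_val i)) in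
  #|Gbar| = #|S| /\ row_free M /\ row_full M.
Proof.
move=> M.
have M_free : row_free M := twchar_mx_free E_sum E_dim E_mul b_in b_neq0
  rho_simple rho_distinct iota_inj iota_grad Gbar_rep J_twist.
have le_S_Gbar : (#|S| <= #|Gbar|)%N by rewrite -(eqP M_free) rank_leq_col.
have le_Gbar_S := card_Gbar_le E_sum E_direct E_dim E_mul b_in b_neq0
  rho_simple rho_all rho_distinct F_morph iota_inj iota_grad Gbar_eff Gbar_rep S_def J_twist.
have card_eq : #|Gbar| = #|S| by apply/eqP; rewrite eqn_leq le_Gbar_S le_S_Gbar.
by split=> //; split=> //; rewrite /row_full (eqP M_free) card_eq.
Qed.
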